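(* For every natural number $n>1$, the following sentences are provable in the theory ${\sf TQ}$: $\forall u\exists y\,[\Re_n(y\cdot u)]$; $\forall x,u\exists y\,[x<y\wedge\Re_n(y\cdot u)]$; $\forall z,u\exists y\,[y<z\wedge\Re_n(y\cdot u)]$; $\forall x,z,u\exists y\,[x<z\rightarrow (x<y\wedge y<z\wedge\Re_n(y\cdot u))]$.
   Context: Language $\{<,\times,\square^{-1},\mathbf{1}\}$; $y^n$ abbreviates $y\cdots y$ ($n$ times); for $n\geqslant 1$, $\Re_n(y)$ abbreviates the formula $\exists x\,(y=x^n)$. ${\sf TQ}$ is the theory axiomatized by: ($\texttt{O}_1$) $\forall x,y(x<y\rightarrow\neg(y<x))$; ($\texttt{O}_2$) $\forall x,y,z(x<y\wedge y<z\rightarrow x<z)$; ($\texttt{O}_3$) $\forall x,y(x<y\vee x=y\vee y<x)$; ($\texttt{M}_1$) $\forall x,y,z(x\cdot(y\cdot z)=(x\cdot y)\cdot z)$; ($\texttt{M}_2$) $\forall x(x\cdot\mathbf{1}=x)$; ($\texttt{M}_3$) $\forall x(x\cdot x^{-1}=\mathbf{1})$; ($\texttt{M}_4$) $\forall x,y(x\cdot y=y\cdot x)$; ($\texttt{M}_5$) $\forall x,y,z(x<y\rightarrow x\cdot z<y\cdot z)$; ($\texttt{M}_6$) $\exists y(y\neq\mathbf{1})$; ($\texttt{M}_{10}$) for each $n\geqslant1$: $\forall x,z\exists y(x<z\rightarrow x<y^n\wedge y^n<z)$; ($\texttt{M}_{11}$) for each $n\geqslant 1$, each $q\geqslant1$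 and all natural numbers $m_0,\dots,m_{q-1}>1$: $\forall x_0,\dots,x_{q-1}\exists y\forall z\bigwedge_{j<q,\ m_j\nmid n}(y^n\cdot x_j\neq z^{m_j})$, the conjunction ranging over those $j<q$ for which $m_j$ does not divide $n$. *)

(* Models of the first-order theory TQ in the language
   {<, *, ^-1, 1}; "provable in TQ" is rendered semantically
   (true in every model of TQ), equivalent by Goedel completeness. *)
From Stdlib Require Import Arith.

Record TQModel := {
  car :> Type;
  lt : car -> car -> Prop;
  mul : car -> car -> car;
  inv : car -> car;
  one : car
}.

(* y^n = y * (y * ... y)  (n copies); y^0 := 1 is never used (n >= 1). *)
Fixpoint pw (M : TQModel) (y : M) (n : nat) : M :=
  match n with
  | 0 => one M
  | 1 => y
  | S k => mul M y (pw M y k)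
  end.

Definition Re (M : TQModel) (n : nat) (y : M) : Prop := exists x, y = pw M x n.

Definition is_TQ (M : TQModel) : Prop :=
  (forall x y : M, lt M x y -> ~ lt M y x) /\
  (forall x y z : M, lt M x y -> lt M y z -> lt M x z) /\
  (forall x y : M, lt M x y \/ x = y \/ lt M y x) /\
  (forall x y z : M, mul M x (mul M y z) = mul M (mul M x y) z) /\
  (forall x : M, mul M x (one M) = x) /\
  (forall x : M, mul M x (inv M x) = one M) /\
  (forall x y : M, mul M x y = mul M y x) /\
  (forall x y z : M, lt M x y -> lt M (mul M x z) (mul M y z)) /\
  (exists y : M, y <> one M) /\
  (forall n : nat, 1 <= n -> forall x z : M, exists y : M,
               lt M x z -> lt M x (pw M y n) /\ lt M (pw M y n) z) /\
  (forall n q : nat, 1 <= n -> 1 <= q ->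
               forall m : nat -> nat, (forall j, j < q -> 1 < m j) ->
               forall xs : nat -> M, exists y : M, forall z : M,
                 forall j, j < q -> ~ Nat.divide (m j) n ->
                   mul M (pw M y n) (xs j) <> pw M z (m j)).

From Stdlib Require Import Arith Lia.

(* Right translation by u^-1 is an order automorphism, so an element y with
   y u an n-th power strictly between x and z is obtained by applying the
   density axiom M10 to the interval (x u, z u) and translating back.  The
   one-sided cases reduce to this one because the order has no endpoints:
   an element a <> 1 yields some b > 1 (a or a^-1), and x < x b, z b^-1 < z. *)

Section OrderedAbelianGroup.

Variable M : TQModel.

Local Notation "x * y" := (mul M x y).
Local Notation "x ^-1" := (inv M x).
Local Notation "1" := (one M).
Local Notation "x < y" := (lt M x y).

Hypothesis lt_total : forall x y : M, x < y \/ x = y \/ y < x.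
Hypothesis mulA : forall x y z : M, x * (y * z) = (x * y) * z.
Hypothesis mulr1 : forall x : M, x * 1 = x.
Hypothesis mulrV : forall x : M, x * x^-1 = 1.
Hypothesis mulC : forall x y : M, x * y = y * x.
Hypothesis ltr_mul2r : forall x y z : M, x < y -> x * z < y * z.
Hypothesis nontrivial : exists y : M, y <> 1.

Lemma mul1r (x : M) : 1 * x = x.
Proof. rewrite mulC. apply mulr1. Qed.

Lemma mulrVK (y u : M) : (y * u^-1) * u = y.
Proof. rewrite <- mulA, (mulC (u^-1) u), mulrV. apply mulr1. Qed.

Lemma mulrK (y u : M) : (y * u) * u^-1 = y.
Proof. rewrite <- mulA, mulrV. apply mulr1. Qed.

Lemma ltr_pmull (b x : M) : 1 < b -> x < x * b.
Proof. intros Hb. pose proof (ltr_mul2r _ _ x Hb) as H. now rewrite mul1r, mulC in H. Qed.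

Lemma ltr_nmull (c x : M) : c < 1 -> x * c < x.
Proof. intros Hc. pose proof (ltr_mul2r _ _ x Hc) as H. now rewrite mul1r, mulC in H. Qed.

Lemma exists_gt1_lt1 : exists b c : M, 1 < b /\ c < 1.
Proof.
  destruct nontrivial as [a Ha].
  destruct (lt_total a 1) as [Hlt | [Heq | Hgt]].
  - exists (a^-1), a. split; [|exact Hlt].
    pose proof (ltr_mul2r _ _ (a^-1) Hlt) as H. now rewrite mulrV, mul1r in H.
  - contradiction.
  - exists a, (a^-1). split; [exact Hgt|].
    pose proof (ltr_mul2r _ _ (a^-1) Hgt) as H. now rewrite mulrV, mul1r in H.
Qed.

Lemma exists_gt (x : M) : exists y : M, x < y.
Proof. destruct exists_gt1_lt1 as (b & _ & Hb & _). exists (x * b). now apply ltr_pmull. Qed.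

Lemma exists_lt (z : M) : exists y : M, y < z.
Proof. destruct exists_gt1_lt1 as (_ & c & _ & Hc). exists (z * c). now apply ltr_nmull. Qed.

Variable n : nat.

Hypothesis dense_pow : forall x z : M, exists y : M,
  x < z -> x < pw M y n /\ pw M y n < z.

Lemma exists_Re_mul_between (x z u : M) : exists y : M,
  x < z -> x < y /\ y < z /\ Re M n (y * u).
Proof.
  destruct (dense_pow (x * u) (z * u)) as [w Hw].
  exists (pw M w n * u^-1). intros Hxz.
  destruct (Hw (ltr_mul2r _ _ _ Hxz)) as [Hlo Hhi].
  split; [|split].
  - rewrite <- (mulrK x u) at 1. now apply ltr_mul2r.
  - rewrite <- (mulrK z u) at 1. now apply ltr_mul2r.
  - exists w. apply mulrVK.
Qed.

Lemma exists_Re_mul_gt (x u : M) : exists y : M, x < y /\ Re M n (y * u).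
Proof.
  destruct (exists_gt x) as [z Hxz].
  destruct (exists_Re_mul_between x z u) as [y Hy].
  destruct (Hy Hxz) as (Hxy & _ & HRe). eauto.
Qed.

Lemma exists_Re_mul_lt (z u : M) : exists y : M, y < z /\ Re M n (y * u).
Proof.
  destruct (exists_lt z) as [x Hxz].
  destruct (exists_Re_mul_between x z u) as [y Hy].
  destruct (Hy Hxz) as (_ & Hyz & HRe). eauto.
Qed.

End OrderedAbelianGroup.

Theorem lemma3 : forall (M : TQModel), is_TQ M -> forall n : nat, 1 < n ->
  (forall u : M, exists y : M, Re M n (mul M y u)) /\
  (forall x u : M, exists y : M, lt M x y /\ Re M n (mul M y u)) /\
  (forall z u : M, exists y : M, lt M y z /\ Re M n (mul M y u)) /\
  (forall x z u : M, exists y : M,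
     lt M x z -> lt M x y /\ lt M y z /\ Re M n (mul M y u)).
Proof.
  intros M HM n Hn.
  destruct HM as (_ & _ & O3 & M1 & M2 & M3 & M4 & M5 & M6 & M10 & _).
  pose proof (M10 n ltac:(lia)) as dense_pow.
  pose proof (exists_Re_mul_gt M O3 M1 M2 M3 M4 M5 M6 n dense_pow) as Hgt.
  split; [|split; [exact Hgt|split]].
  - intros u. destruct (Hgt u u) as (y & _ & HRe). eauto.
  - exact (exists_Re_mul_lt M O3 M1 M2 M3 M4 M5 M6 n dense_pow).
  - exact (exists_Re_mul_between M M1 M2 M3 M4 M5 n dense_pow).
Qed.
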